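(* There exists an absolute constant $C>0$ and, for each $q\in[2,\infty)$, a constant $c_q>0$ such that the following holds. Let $N,n,m\in\mathbb N$, let $w_1,\dots,w_N\ge 0$ be weights with $\sum_{i=1}^N w_i>0$, and let $\{1,\dots,N\}=\bigsqcup_{s=1}^m\Delta_s$ be a partition into $m$ blocks with $N_s=|\Delta_s|$. Assume: 1) $\max_{1\le i\le N}w_i\le (4n)^{-1}\sum_{i=1}^N w_i$; 2) for every $s=1,\dots,m$, $\nu_s:=\dfrac{\sum_{i\in\Delta_s}w_i}{\sum_{i=1}^N w_i}\ge \dfrac{C\log(2m)}{n}$. Let $q\in[2,\infty)$, $h>0$, and let $X=(\mathbb R^N,\|\cdot\|_X)$ be a normed space with $\|x\|_X\ge\max(\|x\|_{\ell^N_{q,w}},\,h\|x\|_\infty)$ for all $x\in\mathbb R^N$. Then $$d_n\Big(\prod_{s=1}^m B_1^{N_s},X\Big)\ge\min\Big(c_q\,\big(n\max_{1\le s\le m}\nu_s\big)^{-1/2}\Big(\sum_{i=1}^N w_i\Big)^{1/q},\ h/2\Big).$$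
   Context: The weighted norm is $\|x\|_{\ell^N_{q,w}}=\left(\sum_{i=1}^N w_i|x_i|^q\right)^{1/q}$ and $\|x\|_\infty=\max_i|x_i|$. The product of octahedra is $\prod_{s=1}^m B_1^{N_s}=\{x\in\mathbb R^N:\sum_{i\in\Delta_s}|x_i|\le 1\ \text{for } s=1,\dots,m\}$. For a normed space $X$ and $K\subset X$, the Kolmogorov $n$-width is $d_n(K,X)=\inf_{Q_n}\sup_{x\in K}\inf_{y\in Q_n}\|x-y\|_X$, the infimum over linear subspaces $Q_n\subset X$ with $\dim Q_n\le n$. *)

From HB Require Import structures.
From mathcomp Require Import all_boot all_order all_algebra.
From mathcomp Require Import all_classical all_reals all_analysis.
Set Implicit Arguments. Unset Strict Implicit. Unset Printing Implicit Defensive.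
Import Order.TTheory GRing.Theory Num.Theory.
Local Open Scope classical_set_scope.
Local Open Scope ring_scope.

Definition is_norm (R : realType) (N : nat) (nX : 'rV[R]_N -> R) : Prop :=
  [/\ forall x y, nX (x + y) <= nX x + nX y,
      forall (a : R) x, nX (a *: x) = `|a| * nX x
    & forall x, nX x = 0 -> x = 0].

Definition lqw_norm (R : realType) (N : nat) (q : R) (w : 'I_N -> R)
    (x : 'rV[R]_N) : R :=
  (\sum_(i < N) w i * (`|x 0 i| `^ q)) `^ (1 / q).

Definition linf_norm (R : realType) (N : nat) (x : 'rV[R]_N) : R :=
  \big[Num.max/0]_(i < N) `|x 0 i|.

(* product of octahedra: the blocks are Delta_s = {i | blk i = s} *)
Definition prod_octahedra (R : realType) (N m : nat) (blk : 'I_N -> 'I_m)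
  : set 'rV[R]_N :=
  [set x | forall s : 'I_m, \sum_(i < N | blk i == s) `|x 0 i| <= 1].

Definition kolmogorov_width (R : realType) (N : nat) (nX : 'rV[R]_N -> R)
    (K : set 'rV[R]_N) (n : nat) : \bar R :=
  ereal_inf [set ereal_sup [set ereal_inf [set (nX (x - y))%:E | y in
                  [set y | y \in Q]] | x in K]
            | Q in [set Q : {vspace 'rV[R]_N} | (\dim Q <= n)%N]].

From HB Require Import structures.
From mathcomp Require Import all_boot all_order all_algebra.
From mathcomp Require Import all_classical all_reals all_analysis.
From mathcomp Require Import ring lra.
Import Order.TTheory GRing.Theory Num.Theory.
Local Open Scope classical_set_scope.
Local Open Scope ring_scope.
Set Implicit Arguments. Unset Strict Implicit. Unset Printing Implicit Defensive.

(* Fix a subspace Q with dim Q <= n and let P be the orthogonal projection onto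
   Q for the inner product <x, y>_w = sum_i w_i x_i y_i; then tr P <= n.  In
   each block s pick an index i_s of positive weight with
     P_{i_s i_s} / w_{i_s} <= (sum_{j in block s} P_jj) / (sum_{j in block s} w_j),
   and look at the vertices x = sum_s e_s delta_{i_s} of the product of
   octahedra.  If y is in Q and |x - y|_oo < 1/2, then <y, g>_w > 1/2 for
   g = sum_s e_s nu_s / w_{i_s} delta_{i_s}; as <y, g>_w = <x, P g>_w - <x - y, P g>_w,
   the AM-GM inequality gives
     1/2 < <x, P g>_w + lam/2 <g, P g>_w + |x - y|_{2,w}^2 / (2 lam).
   The first two terms are a quadratic form in the signs e, which for a suitable
   choice of signs is at most its trace, and the trace is at most
   1/4 + lam n nu_max / (2 W) thanks to the choice of i_s and w_i <= W / (4 n).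
   Taking lam = W / (4 n nu_max) yields |x - y|_{2,w}^2 > W / (16 n nu_max), and
   the power-mean inequality converts this into the l_{q,w} bound. *)

Section DotProduct.
Variables (R : realFieldType) (N : nat).
Implicit Types (u v g : 'rV[R]_N) (P : 'M[R]_N).

(* The [dotmx] of spectral.v requires a numClosedFieldType. *)
Definition rdotmx u v : R := (u *m v^T) 0 0.

Lemma rdotmxE u v : rdotmx u v = \sum_j u 0 j * v 0 j.
Proof. by rewrite /rdotmx mxE; apply: eq_bigr => j _; rewrite mxE. Qed.

Lemma rdotmxBl u v g : rdotmx (u - v) g = rdotmx u g - rdotmx v g.
Proof. by rewrite /rdotmx mulmxBl !mxE. Qed.

Lemma rdotmxC u v : rdotmx u v = rdotmx v u.
Proof. by rewrite !rdotmxE; apply: eq_bigr => j _; rewrite mulrC. Qed.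

Lemma rdotmx_eq0 u : rdotmx u u = 0 -> u = 0.
Proof.
rewrite rdotmxE => /psumr_eq0P u0; apply/rowP => j; rewrite mxE.
by apply/eqP; rewrite -sqrf_eq0 expr2 u0 // => k _; rewrite -expr2 sqr_ge0.
Qed.

Lemma rdotmx_mulmx_sym P u v : P^T = P -> rdotmx (u *m P) v = rdotmx u (v *m P).
Proof. by move=> PT; rewrite /rdotmx trmx_mul PT mulmxA. Qed.

Lemma rdotmx_le_proj P u v g (lam : R) :
  P^T = P -> P *m P = P -> v *m P = v -> 0 < lam ->
  rdotmx v g <= rdotmx u (g *m P) + lam / 2 * rdotmx g (g *m P)
               + rdotmx (u - v) (u - v) / (2 * lam).
Proof.
move=> PT PP vP lam_gt0; set h := g *m P.
have -> : rdotmx v g = rdotmx u h - rdotmx (u - v) h.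
  by rewrite -rdotmxBl opprB addrC subrK -rdotmx_mulmx_sym // vP.
have -> : rdotmx g h = rdotmx h h by rewrite /h rdotmx_mulmx_sym // -mulmxA PP.
suff : - rdotmx (u - v) h <= rdotmx (u - v) (u - v) / (2 * lam) + lam / 2 * rdotmx h h.
  by lra.
rewrite !rdotmxE -sumrN mulr_suml mulr_sumr -big_split /=; apply: ler_sum => j _.
rewrite -subr_ge0; set a := (u - v) 0 j; set b := h 0 j.
have -> : a * a / (2 * lam) + lam / 2 * (b * b) - - (a * b) = (a + lam * b) ^+ 2 / (2 * lam).
  by field; rewrite gt_eqF.
by rewrite divr_ge0 ?sqr_ge0 // mulr_ge0 // ltW.
Qed.

End DotProduct.

Lemma exists_orthogonal_projector (R : realFieldType) d N (A : 'M[R]_(d, N)) :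
  exists P : 'M[R]_N, [/\ P^T = P, P *m P = P, \tr P <= d%:R &
    forall u : 'rV_N, (u <= A)%MS -> u *m P = u].
Proof.
have [B [B_free sAB rankB]] : exists B : 'M[R]_(\rank A, N),
    [/\ row_free B, (A <= B)%MS & (\rank A <= d)%N].
  by exists (row_base A); rewrite row_base_free eq_row_base rank_leq_row.
set G := B *m B^T.
have G_unit : G \in unitmx.
  rewrite -row_free_unit; apply: inj_row_free => v vG0.
  have vB0 : v *m B = 0.
    by apply: rdotmx_eq0; rewrite /rdotmx trmx_mul mulmxA -(mulmxA v) vG0 mul0mx mxE.
  by apply/eqP; rewrite -(mulmx_free_eq0 _ B_free) vB0.
have GK : B *m B^T *m invmx G = 1%:M by rewrite mulmxV.
exists (B^T *m invmx G *m B); split.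
- by rewrite !trmx_mul trmxK trmx_inv /G trmx_mul trmxK mulmxA.
- by rewrite -!mulmxA (mulmxA B) (mulmxA (B *m B^T)) GK mul1mx.
- by rewrite mxtrace_mulC mulmxA mulmxV // mxtrace1 ler_nat.
- move=> u /submxP [c ->]; have /submxP [c' ->] := submx_trans (submxMl c A) sAB.
  by rewrite -!mulmxA (mulmxA B) (mulmxA (B *m B^T)) GK mul1mx.
Qed.

Lemma sym_idem_diag_ge0 (R : realFieldType) N (P : 'M[R]_N) :
  P^T = P -> P *m P = P -> forall j, 0 <= P j j.
Proof.
move=> PT PP j; rewrite -PP mxE sumr_ge0 // => k _.
by rewrite -{2}PT mxE -expr2 sqr_ge0.
Qed.

(* Derandomized E[e_s e_t] = [s == t]: each new sign makes its cross terms with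
   the previous ones nonpositive. *)
Lemma exists_signs_quadratic_le_trace (R : realFieldType) m (M : 'I_m -> 'I_m -> R) :
  exists e : 'I_m -> R, (forall s, e s = 1 \/ e s = -1) /\
    \sum_s \sum_t e s * e t * M s t <= \sum_s M s s.
Proof.
elim: m M => [|m IH] M.
  by exists (fun _ => 1); split; [left | rewrite !big_ord0].
have [e' [e'_sign e'_le]] := IH (fun s t => M (lift ord0 s) (lift ord0 t)).
set c := \sum_t e' t * (M ord0 (lift ord0 t) + M (lift ord0 t) ord0).
pose e0 : R := if c <= 0 then 1 else -1.
have e0c : e0 * c <= 0.
  rewrite /e0; case: ifP => [|/negbT]; first by rewrite mul1r.
  by rewrite -ltNge mulN1r oppr_le0 => /ltW.
have e0_sq : e0 * e0 = 1 by rewrite /e0; case: ifP; rewrite ?mulrNN mulr1.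
exists (fun s => if unlift ord0 s is Some t then e' t else e0); split.
  by move=> s; case: (unlift ord0 s) => [t|]; [exact: e'_sign | rewrite /e0; case: ifP; auto].
rewrite big_ord_recl unlift_none big_ord_recl unlift_none [in X in _ <= X]big_ord_recl.
under eq_bigr => t _ do rewrite liftK.
under [X in _ + X <= _]eq_bigr => s _ do rewrite big_ord_recl unlift_none liftK.
under [X in _ + X <= _]eq_bigr => s _ do under eq_bigr => t _ do rewrite liftK.
rewrite big_split /= e0_sq mul1r -!addrA lerD2l addrA -[X in _ <= X]add0r lerD //.
apply: le_trans e0c; rewrite /c mulr_sumr -big_split /=.
by rewrite le_eqVlt; apply/orP; left; apply/eqP; apply: eq_bigr => t _; ring.
Qed.

Lemma exists_ratio_le_mean (R : realFieldType) (I : finType) (P : pred I)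
    (a b : I -> R) :
  (forall j, 0 <= a j) -> (forall j, 0 <= b j) -> 0 < \sum_(j | P j) a j ->
  exists j, [/\ P j, 0 < a j & (\sum_(j | P j) a j) * b j <= a j * \sum_(j | P j) b j].
Proof.
move=> a_ge0 b_ge0 sa_gt0; set A := \sum_(j | P j) a j in sa_gt0 *.
set B := \sum_(j | P j) b j.
have [//|no_j] := pselect (exists j, [/\ P j, 0 < a j & A * b j <= a j * B]).
have [j0 /andP [Pj0 aj0]] : exists j, P j && (0 < a j).
  by apply: psumr_neq0P => [j _|]; [exact: a_ge0 | move/eqP; rewrite gt_eqF].
pose Ppos j := P j && (0 < a j).
have A_pos : A = \sum_(j | Ppos j) a j.
  rewrite /A (bigID (fun j => 0 < a j)) /= [X in _ + X]big1 ?addr0 // => j /andP [_ /negbTE aj].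
  by apply/eqP; rewrite eq_le a_ge0 leNgt aj.
have B_pos : \sum_(j | Ppos j) b j <= B.
  rewrite /B [X in _ <= X](bigID (fun j => 0 < a j)) /= lerDl.
  by apply: sumr_ge0 => j _; exact: b_ge0.
have : A * B < A * \sum_(j | Ppos j) b j.
  rewrite {1}A_pos mulr_suml mulr_sumr; apply: ltr_sum.
    by apply/hasP; exists j0; rewrite ?mem_index_enum /Ppos ?Pj0.
  move=> j /andP [Pj aj]; rewrite ltNge; apply/negP => le_j.
  by apply: no_j; exists j; split; rewrite // mulrC.
by rewrite ltNge ler_wpM2l // ltW.
Qed.

Lemma young_powR (R : realType) (p u : R) : 1 <= p -> 0 <= u ->
  u <= u `^ p / p + (1 - p^-1).
Proof.
move=> p_ge1 u_ge0; have [->|p_neq1] := eqVneq p 1.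
  by rewrite powRr1 // invr1 mulr1 subrr addr0.
have p_gt1 : 1 < p by rewrite lt_neqAle eq_sym p_neq1.
have p_gt0 : 0 < p by apply: lt_trans p_gt1.
have p1_gt0 : 0 < p - 1 by rewrite subr_gt0.
have := @conjugate_powR R u 1 p (p / (p - 1)) u_ge0 ler01 p_gt0 (divr_gt0 p_gt0 p1_gt0).
rewrite powR1 mulr1; have -> : 1 - p^-1 = 1 / (p / (p - 1)) by field; rewrite ?gt_eqF.
by apply; field; rewrite ?gt_eqF.
Qed.

(* Young's inequality with exponent q/2, applied to (|d_i| / a)^2. *)
Lemma weighted_sq_lt_of_powR_lt (R : realType) (I : finType) (q a : R) (w d : I -> R) :
  2 <= q -> 0 < a -> (forall i, 0 <= w i) ->
  \sum_i w i * `|d i| `^ q < a `^ q * \sum_i w i ->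
  \sum_i w i * d i ^+ 2 < a ^+ 2 * \sum_i w i.
Proof.
move=> q_ge2 a_gt0 w_ge0; set W := \sum_i w i; pose p := q / 2.
have p_ge1 : 1 <= p by rewrite /p ler_pdivlMr // mul1r.
pose v i := `|d i| / a.
have v_ge0 i : 0 <= v i by rewrite /v divr_ge0 // ltW.
have dq i : `|d i| `^ q = a `^ q * v i `^ q.
  by rewrite -powRM ?(ltW a_gt0) // /v mulrC divfK ?gt_eqF.
have d2 i : d i ^+ 2 = a ^+ 2 * v i ^+ 2.
  by rewrite /v -exprMn mulrC divfK ?gt_eqF // real_normK ?num_real.
have v2p i : (v i ^+ 2) `^ p = v i `^ q.
  by rewrite -powR_mulrn // -powRrM /p mulrC mulfVK.
under eq_bigr => i _ do rewrite dq mulrCA.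
rewrite -mulr_sumr ltr_pM2l ?powR_gt0 // => sum_vq.
under eq_bigr => i _ do rewrite d2 mulrCA.
rewrite -mulr_sumr ltr_pM2l ?exprn_gt0 //.
have young : \sum_i w i * v i ^+ 2 <= p^-1 * \sum_i w i * v i `^ q + (1 - p^-1) * W.
  rewrite /W !mulr_sumr -big_split /=; apply: ler_sum => i _.
  have := ler_wpM2l (w_ge0 i) (young_powR p_ge1 (sqr_ge0 (v i))).
  by rewrite v2p mulrDr; lra.
apply: (le_lt_trans young).
have : p^-1 * \sum_i w i * v i `^ q < p^-1 * W by rewrite ltr_pM2l ?invr_gt0 ?(lt_le_trans ltr01).
lra.
Qed.

Lemma vspace_sub_basis_mx (R : fieldType) N (Q : {vspace 'rV[R]_N}) :
  exists B : 'M[R]_(\dim Q, N), forall y, y \in Q -> (y <= B)%MS.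
Proof.
exists (\matrix_(k < \dim Q) (vbasis Q)`_k) => y /coord_vbasis ->.
apply: summx_sub => k _; apply: scalemx_sub.
by have := row_sub k (\matrix_(k < \dim Q) (vbasis Q)`_k); rewrite rowK.
Qed.

Lemma le_kolmogorov_width (R : realType) N (nX : 'rV[R]_N -> R)
    (K : set 'rV[R]_N) n (r : R) :
  (forall Q : {vspace 'rV[R]_N}, (\dim Q <= n)%N ->
     exists2 x, K x & forall y, y \in Q -> r <= nX (x - y)) ->
  (r%:E <= kolmogorov_width nX K n)%E.
Proof.
move=> far; apply/ereal_infP => _ [Q dimQ <-].
have [x Kx x_far] := far Q dimQ.
apply: le_ereal_sup_tmp.
exists (ereal_inf [set (nX (x - y))%:E | y in [set y | y \in Q]]); first by exists x.
by apply/ereal_infP => _ [y Qy <-]; rewrite lee_fin; exact: x_far.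
Qed.

Lemma linf_norm_ge (R : realType) N (x : 'rV[R]_N) j : `|x 0 j| <= linf_norm x.
Proof. exact: (le_bigmax _ (fun j => `|x 0 j|) j). Qed.

Lemma sum_powR_lt_of_lqw_norm_lt (R : realType) N (q a : R) (w : 'I_N -> R) (x : 'rV[R]_N) :
  0 < q -> 0 < a -> (forall i, 0 <= w i) ->
  lqw_norm q w x < a * (\sum_i w i) `^ (1 / q) ->
  \sum_i w i * `|x 0 i| `^ q < a `^ q * \sum_i w i.
Proof.
move=> q_gt0 a_gt0 w_ge0; set S := \sum_i w i * _; set W := \sum_i w i.
have S_ge0 : 0 <= S by apply: sumr_ge0 => i _; rewrite mulr_ge0 ?powR_ge0.
have W_ge0 : 0 <= W by apply: sumr_ge0.
rewrite /lqw_norm -/S => lt_norm.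
have := gt0_ltr_powR q_gt0 _ _ lt_norm; rewrite !nnegrE powR_ge0 mulr_ge0 ?powR_ge0 ?ltW //.
move=> /(_ isT isT); rewrite powRM ?(ltW a_gt0) ?powR_ge0 //.
by rewrite -(powRrM S) -(powRrM W) mul1r mulVf ?gt_eqF // !powRr1.
Qed.

Lemma min_le_norm_of_far (R : realType) N (q h a : R) (w : 'I_N -> R)
    (nX : 'rV[R]_N -> R) (d : 'rV[R]_N) :
  2 <= q -> 0 < h -> 0 < a -> (forall i, 0 <= w i) ->
  Num.max (lqw_norm q w d) (h * linf_norm d) <= nX d ->
  ((forall j, `|d 0 j| < 2^-1) -> a ^+ 2 * \sum_j w j <= \sum_j w j * d 0 j ^+ 2) ->
  Num.min (a * (\sum_j w j) `^ (1 / q)) (h / 2) <= nX d.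
Proof.
move=> q_ge2 h_gt0 a_gt0 w_ge0; rewrite ge_max => /andP [lq_le linf_le] far.
rewrite leNgt lt_min; apply/negP => /andP [lt_lq lt_linf].
have q_gt0 : 0 < q by apply: lt_le_trans q_ge2.
have small_coord j : `|d 0 j| < 2^-1.
  rewrite -(ltr_pM2l h_gt0); apply: le_lt_trans lt_linf.
  by apply: le_trans _ linf_le; rewrite ler_wpM2l ?(ltW h_gt0) ?linf_norm_ge.
have := far small_coord; rewrite leNgt => /negP; apply.
apply: (weighted_sq_lt_of_powR_lt q_ge2 a_gt0 w_ge0).
exact: sum_powR_lt_of_lqw_norm_lt q_gt0 a_gt0 w_ge0 (le_lt_trans lq_le lt_lq).
Qed.

Section SelectedVectors.
Variables (R : realFieldType) (N m : nat) (blk : 'I_N -> 'I_m) (sel : 'I_m -> 'I_N).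
Hypothesis selK : cancel sel blk.

Definition selvec (c : 'I_m -> R) : 'rV[R]_N := \sum_s c s *: 'e_(sel s).

Lemma selvec_mulmx k c (A : 'M[R]_(N, k)) j :
  (selvec c *m A) 0 j = \sum_s c s * A (sel s) j.
Proof.
rewrite /selvec mulmx_suml summxE; apply: eq_bigr => s _.
by rewrite -scalemxAl -rowE !mxE.
Qed.

Lemma selvecE c j : selvec c 0 j = if j == sel (blk j) then c (blk j) else 0.
Proof.
rewrite summxE (bigD1 (blk j)) //= big1 => [|s s_neq]; rewrite !mxE eqxx /=.
  by case: ifP; rewrite ?mulr1 ?mulr0 addr0.
by case: eqP => [j_sel|_]; [rewrite j_sel selK eqxx in s_neq | rewrite mulr0].
Qed.

Lemma selvec_sel c s : selvec c 0 (sel s) = c s.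
Proof. by rewrite selvecE selK eqxx. Qed.

Lemma sum_block_norm_selvec c s : \sum_(j | blk j == s) `|selvec c 0 j| = `|c s|.
Proof.
rewrite (bigD1 (sel s)) ?selK //= selvec_sel big1 ?addr0 // => j /andP [/eqP bj j_neq].
by rewrite selvecE bj (negPf j_neq) normr0.
Qed.

Lemma rdotmx_selvec c v : rdotmx (selvec c) v = \sum_s c s * v 0 (sel s).
Proof. by rewrite /rdotmx selvec_mulmx; apply: eq_bigr => s _; rewrite mxE. Qed.

Lemma selvec_mul_diag c d :
  selvec c *m diag_mx d = selvec (fun s => c s * d 0 (sel s)).
Proof.
apply/rowP => j; rewrite mul_mx_diag !mxE !selvecE.
by case: eqP => [<-|_]; rewrite ?mul0r.
Qed.

Lemma rdotmx_selvec_mulmx a b (A : 'M[R]_N) :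
  rdotmx (selvec a) (selvec b *m A) = \sum_s \sum_t a s * b t * A (sel t) (sel s).
Proof.
rewrite rdotmx_selvec; apply: eq_bigr => s _.
by rewrite selvec_mulmx mulr_sumr; apply: eq_bigr => t _; rewrite mulrA.
Qed.

End SelectedVectors.

Section FarVertex.
Variables (R : realType) (N n m : nat) (w : 'I_N -> R) (blk : 'I_N -> 'I_m).
Let W := \sum_j w j.
Let Wb s := \sum_(j | blk j == s) w j.
Let nu s := Wb s / W.
Let Z := n%:R * \big[Num.max/0]_s nu s.
Hypotheses (n_gt0 : (0 < n)%N) (w_ge0 : forall j, 0 <= w j) (W_gt0 : 0 < W)
  (w_small : forall j, w j <= (4 * n%:R)^-1 * W) (Wb_gt0 : forall s, 0 < Wb s).

Let m_gt0 : (0 < m)%N.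
Proof.
have [j _] : exists j, true && (0 < w j).
  by apply: psumr_neq0P => [j _|]; [exact: w_ge0 | move/eqP; rewrite gt_eqF].
exact: leq_ltn_trans (leq0n _) (ltn_ord (blk j)).
Qed.

Let nu_gt0 s : 0 < nu s. Proof. exact: divr_gt0. Qed.

Let nu_le_max s : nu s <= \big[Num.max/0]_s nu s.
Proof. exact: (le_bigmax _ nu s). Qed.

Let sum_nu : \sum_s nu s = 1.
Proof.
rewrite -mulr_suml; have -> : \sum_s Wb s = W by rewrite /W (partition_big blk xpredT).
by rewrite divff ?gt_eqF.
Qed.

Lemma block_share_scale_gt0 : 0 < Z.
Proof.
by rewrite mulr_gt0 ?ltr0n // (lt_le_trans (nu_gt0 (Ordinal m_gt0))).
Qed.

Let Dh := diag_mx (\row_j Num.sqrt (w j)).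

Section Witness.
Variables (P : 'M[R]_N) (sel : 'I_m -> 'I_N) (lam : R).
Hypotheses (PT : P^T = P) (PP : P *m P = P) (trP : \tr P <= n%:R)
  (selK : cancel sel blk) (w_sel_gt0 : forall s, 0 < w (sel s))
  (P_sel_le : forall s,
     Wb s * P (sel s) (sel s) <= w (sel s) * \sum_(j | blk j == s) P j j)
  (lam_gt0 : 0 < lam).

Let sq s := Num.sqrt (w (sel s)).

Let sq_gt0 s : 0 < sq s. Proof. by rewrite sqrtr_gt0. Qed.

(* For x = selvec sel e and g = sum_t e_t nu_t / sqrt (w (sel t)) delta_(sel t),
   <x Dh, g P> + lam/2 <g, g P> = sum_s sum_t e_s e_t far_form s t. *)
Definition far_form s t :=
  (sq s * (nu t / sq t) + lam / 2 * (nu s / sq s) * (nu t / sq t)) * P (sel t) (sel s).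

Lemma far_form_trace_le : \sum_s far_form s s <= 4^-1 + lam * Z / (2 * W).
Proof.
pose T s := \sum_(j | blk j == s) P j j.
pose kappa := (4 * n%:R)^-1 + lam / (2 * W) * \big[Num.max/0]_s nu s.
have Pd_ge0 := sym_idem_diag_ge0 PT PP.
have ratio_ge0 : 0 <= lam / (2 * W) by rewrite divr_ge0 ?mulr_ge0 ?ltW.
have diag_le s : far_form s s <= T s * kappa.
  set i := sel s; have wi_gt0 : 0 < w i := w_sel_gt0 s.
  have sq2 : sq s ^+ 2 = w i by rewrite sqr_sqrtr // ltW.
  have -> : far_form s s = (nu s + lam / 2 * nu s ^+ 2 / sq s ^+ 2) * P i i.
    by rewrite /far_form; field; rewrite gt_eqF ?sq_gt0.
  have -> : (nu s + lam / 2 * nu s ^+ 2 / sq s ^+ 2) * P i i =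
            (Wb s * P i i / w i) * (w i / W + lam / (2 * W) * nu s).
    by rewrite sq2 /nu; field; rewrite !gt_eqF.
  apply: ler_pM.
  - by rewrite divr_ge0 ?mulr_ge0 ?Pd_ge0 ?ltW ?Wb_gt0.
  - by rewrite addr_ge0 ?(mulr_ge0 ratio_ge0 (ltW (nu_gt0 s))) ?divr_ge0 ?w_ge0 ?(ltW W_gt0).
  - by rewrite ler_pdivrMr // [T s * _]mulrC; exact: P_sel_le.
  - by rewrite lerD ?ler_wpM2l ?nu_le_max // ler_pdivrMr // mulrC.
apply: le_trans (ler_sum _ (fun s _ => diag_le s)) _.
rewrite -mulr_suml; have -> : \sum_s T s = \tr P.
  by rewrite /mxtrace (partition_big blk xpredT).
apply: le_trans (ler_wpM2r _ trP) _.
  by rewrite addr_ge0 ?(mulr_ge0 ratio_ge0) ?bigmax_ge_id // invr_ge0 mulr_ge0 ?ler0n.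
suff -> : n%:R * kappa = 4^-1 + lam * Z / (2 * W) by [].
by rewrite /kappa /Z; field; rewrite !gt_eqF // ltr0n.
Qed.

Variable e : 'I_m -> R.
Hypotheses (e_sign : forall s, e s = 1 \/ e s = -1)
  (e_form : \sum_s \sum_t e s * e t * far_form s t <= \sum_s far_form s s).

Lemma far_vertex_sq_lower (y : 'rV[R]_N) :
  y *m Dh *m P = y *m Dh -> (forall j, `|(selvec sel e - y) 0 j| < 2^-1) ->
  lam / 2 - lam ^+ 2 * Z / W < \sum_j w j * (selvec sel e - y) 0 j ^+ 2.
Proof.
move=> yP small; set x := selvec sel e; set d := x - y.
set g := selvec sel (fun t => e t * (nu t / sq t)).
have Dh_sel (v : 'rV_N) s : (v *m Dh) 0 (sel s) = v 0 (sel s) * sq s.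
  by rewrite mul_mx_diag !mxE.
have half_lt : 2^-1 < rdotmx (y *m Dh) g.
  rewrite rdotmxC rdotmx_selvec.
  have -> : 2^-1 = \sum_t nu t * 2^-1 :> R by rewrite -mulr_suml sum_nu mul1r.
  apply: ltr_sum => [|t _].
    by apply/hasP; exists (Ordinal m_gt0); rewrite ?mem_index_enum.
  rewrite Dh_sel.
  have -> : e t * (nu t / sq t) * (y 0 (sel t) * sq t) = nu t * (e t * y 0 (sel t)).
    by field; rewrite gt_eqF ?sq_gt0.
  rewrite ltr_pM2l ?nu_gt0 //.
  have /andP [lo hi] : - 2^-1 < d 0 (sel t) < 2^-1 by rewrite -ltr_norml small.
  have dE : d 0 (sel t) = e t - y 0 (sel t) by rewrite !mxE (selvec_sel selK).
  by case: (e_sign t) dE lo hi => -> ->; lra.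
have proj := rdotmx_le_proj (x *m Dh) g PT PP yP lam_gt0.
have xDh : x *m Dh = selvec sel (fun s => e s * sq s).
  by rewrite (selvec_mul_diag selK); congr selvec; apply/funext => s; rewrite mxE.
have form : rdotmx (x *m Dh) (g *m P) + lam / 2 * rdotmx g (g *m P)
            = \sum_s \sum_t e s * e t * far_form s t.
  rewrite xDh !rdotmx_selvec_mulmx mulr_sumr -big_split; apply: eq_bigr => s _ /=.
  rewrite mulr_sumr -big_split; apply: eq_bigr => t _ /=.
  by rewrite /far_form; ring.
have dist : rdotmx (x *m Dh - y *m Dh) (x *m Dh - y *m Dh) = \sum_j w j * d 0 j ^+ 2.
  rewrite -mulmxBl -/d rdotmxE; apply: eq_bigr => j _.
  by rewrite mul_mx_diag !mxE mulrACA -!expr2 sqr_sqrtr // mulrC.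
have := e_form; rewrite -form => quad_le.
have := far_form_trace_le; rewrite dist in proj => trace_le.
have : 4^-1 - lam * Z / (2 * W) < (\sum_j w j * d 0 j ^+ 2) / (2 * lam) by lra.
rewrite ltr_pdivlMr ?mulr_gt0 //; congr (_ < _); field.
by rewrite !gt_eqF.
Qed.

End Witness.

Lemma exists_vertex_far_from_subspace (Q : {vspace 'rV[R]_N}) : (\dim Q <= n)%N ->
  exists2 x, prod_octahedra blk x & forall y, y \in Q ->
    (forall j, `|(x - y) 0 j| < 2^-1) -> W / (16 * Z) < \sum_j w j * (x - y) 0 j ^+ 2.
Proof.
move=> dimQ; have [B sQB] := vspace_sub_basis_mx Q.
(* After rescaling by Dh = diag (sqrt w), P is the w-orthogonal projection onto Q. *)
have [P [PT PP trP fixP]] := exists_orthogonal_projector (B *m Dh).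
have trPn : \tr P <= n%:R by apply: le_trans trP _; rewrite ler_nat.
have sel_ex s : exists j, [/\ blk j == s, 0 < w j &
    Wb s * P j j <= w j * \sum_(j | blk j == s) P j j].
  exact: exists_ratio_le_mean w_ge0 (sym_idem_diag_ge0 PT PP) (Wb_gt0 s).
have [sel sel_spec] := choice sel_ex.
have selK : cancel sel blk by move=> s; case: (sel_spec s) => /eqP.
pose lam := W / (4 * Z).
have lam_gt0 : 0 < lam by rewrite divr_gt0 // mulr_gt0 // block_share_scale_gt0.
have [e [e_sign e_form]] := exists_signs_quadratic_le_trace (far_form P sel lam).
exists (selvec sel e) => [s|y Qy small].
  by rewrite sum_block_norm_selvec //; case: (e_sign s) => ->; rewrite ?normrN normr1.
have yP : y *m Dh *m P = y *m Dh by apply: fixP; rewrite submxMr ?sQB.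
have -> : W / (16 * Z) = lam / 2 - lam ^+ 2 * Z / W.
  by rewrite /lam; field; rewrite !gt_eqF ?block_share_scale_gt0.
by apply: (far_vertex_sq_lower (P := P)) => // s; case: (sel_spec s).
Qed.
End FarVertex.

Lemma sqr_powR_Nhalf (R : realType) (z : R) : 0 < z -> (z `^ (- (1 / 2))) ^+ 2 = z^-1.
Proof.
move=> z_gt0; rewrite -powR_mulrn ?powR_ge0 // -powRrM.
have -> : - (1 / 2) * 2%:R = -1 :> R by field.
by rewrite powR_inv1 // ltW.
Qed.

Theorem theorem2 (R : realType) :
  exists C : R, 0 < C /\
  exists c : R -> R, (forall q : R, 2 <= q -> 0 < c q) /\
  forall (N n m : nat) (w : 'I_N -> R) (blk : 'I_N -> 'I_m),
    (0 < n)%N ->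
    (forall i, 0 <= w i) ->
    0 < \sum_(i < N) w i ->
    (forall i, w i <= (4 * n%:R)^-1 * \sum_(j < N) w j) ->
    (forall s : 'I_m,
       (\sum_(i < N | blk i == s) w i) / (\sum_(i < N) w i)
         >= C * ln (2 * m%:R) / n%:R) ->
    forall (q h : R) (nX : 'rV[R]_N -> R),
      2 <= q -> 0 < h ->
      is_norm nX ->
      (forall x, Num.max (lqw_norm q w x) (h * linf_norm x) <= nX x) ->
      ((Num.min
         (c q * (n%:R * \big[Num.max/0]_(s < m)
                   ((\sum_(i < N | blk i == s) w i) / (\sum_(i < N) w i)))
                `^ (- (1 / 2))
              * (\sum_(i < N) w i) `^ (1 / q))
         (h / 2))%:E
      <= kolmogorov_width nX (prod_octahedra blk) n)%E.
Proof.
exists 1; split => //; exists (fun=> 4^-1); split => // N n m w blk n_gt0 w_ge0.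
move=> W_gt0 w_small share_ge q h nX q_ge2 h_gt0 _ nX_ge.
have Wb_gt0 s : 0 < \sum_(i < N | blk i == s) w i.
  have m_gt0 : (0 < m)%N := leq_ltn_trans (leq0n s) (ltn_ord s).
  have ln_gt0 : 0 < ln (2 * m%:R : R).
    by rewrite ln_gt0 // -natrM ltr1n mul2n -addnn (leq_add m_gt0 m_gt0).
  have : 0 < (\sum_(i < N | blk i == s) w i) / (\sum_(i < N) w i).
    by apply: lt_le_trans (share_ge s); rewrite mul1r divr_gt0 ?ltr0n.
  by rewrite pmulr_lgt0 // invr_gt0.
apply: le_kolmogorov_width => Q dimQ.
have [x Kx x_far] := exists_vertex_far_from_subspace n_gt0 w_ge0 W_gt0 w_small Wb_gt0 dimQ.
exists x => // y Qy.
set Z := _ * \big[Num.max/0]_(s < m) _ in x_far *.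
have Z_gt0 : 0 < Z by apply: block_share_scale_gt0.
clearbody Z.
apply: min_le_norm_of_far q_ge2 h_gt0 _ w_ge0 (nX_ge _) _ => [|small].
  by rewrite mulr_gt0 ?powR_gt0.
apply: ltW; rewrite exprMn sqr_powR_Nhalf //.
move: (x_far y Qy small); set W := \sum_(i < N) w i; clearbody W.
by have -> : 4^-1 ^+ 2 * Z^-1 * W = W / (16 * Z) by field; rewrite gt_eqF.
Qed.
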